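(* Consider the sequences $(x_k),(y_k),(\nu_k),(\lambda_k)$ generated by Algorithm 2 (described in the context). Then: (a) for all $k\ge1$, $\ \frac{\lambda_kL}{2}\big\|\lambda_k(F(y_{k-1})+\nu_{k-1})+y_{k-1}-x_{k-1}\big\|\le\theta$; (b) for all $k\ge1$, $\ \frac{\lambda_kL}{2}\big\|\lambda_k(F(y_k)+\nu_k)+y_k-x_{k-1}\big\|\le\hat\theta$.
   Context: Setting: $\mathcal H$ real Hilbert space; $C\subseteq\mathcal H$ nonempty closed convex; $N_C(x)=\{\nu:\langle\nu,y-x\rangle\le0\ \forall y\in C\}$ if $x\in C$, $N_C(x)=\emptyset$ otherwise. $F:C\to\mathcal H$ is monotone, continuously differentiable, and $\|F'(x)-F'(y)\|\le L\|x-y\|$ for all $x,y\in C$, with $L>0$; the set of $x$ with $0\in F(x)+N_C(x)$ is nonempty. For $y\in C$, $F_y(x):=F(y)+F'(y)(x-y)$. Parameters: $0\le\hat\sigma<1/2$; $0<\theta<(1-\hat\sigma)(1-2\hat\sigma)$; $\hat\theta:=\theta\big(\frac{\hat\sigma}{1-\hat\sigma}+\frac{\theta}{(1-\hat\sigma)^2}\big)$; $\eta>2\hat\theta/L$; $\tau:=\dfrac{2(\theta-\hat\theta)}{2\theta+\frac{\eta L}{2}+\sqrt{(2\theta+\frac{\eta L}{2})^2-4\theta(\theta-\hat\theta)}}$. Algorithm 2: input $x_0\in C$, $y_0:=x_0$, $\nu_0:=0$, $\lambda_1>0$ with $\lambda_1^2\|F(y_0)\|\le2\theta/L$. For $k=1,2,\dots$: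 if $F(y_{k-1})+\nu_{k-1}=0$, stop and return $y_{k-1}$. If $\frac{\lambda_kL}{2}\|\lambda_k(F(y_{k-1})+\nu_{k-1})+y_{k-1}-x_{k-1}\|\le\hat\theta$, set $y_k=y_{k-1}$, $\nu_k=\nu_{k-1}$; otherwise find any $(y_k,\nu_k)$ with $\nu_k\in N_C(y_k)$ and $\|\lambda_k(F_{y_{k-1}}(y_k)+\nu_k)+y_k-x_{k-1}\|\le\hat\sigma\|y_k-y_{k-1}\|$. Then, if $\lambda_k\|y_k-x_{k-1}\|\ge\eta$, set $x_k=x_{k-1}-\tau\lambda_k(F(y_k)+\nu_k)$ and $\lambda_{k+1}=(1-\tau)\lambda_k$; else set $x_k=x_{k-1}$ and $\lambda_{k+1}=\lambda_k/(1-\tau)$. Standing assumption: the algorithm never stops at the first test, i.e. $F(y_{k-1})+\nu_{k-1}\neq0$ for all $k$. *)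

From mathcomp Require Import all_boot all_order all_algebra.
From mathcomp Require Import all_classical all_reals all_analysis.
Set Implicit Arguments. Unset Strict Implicit. Unset Printing Implicit Defensive.
Import Order.TTheory GRing.Theory Num.Theory.
Import numFieldNormedType.Exports.
Local Open Scope classical_set_scope.
Local Open Scope ring_scope.

(* [ip] is an inner product on the normed space V inducing its norm:
   symmetric, linear in the first argument, and <x,x> = |x|^2.
   Together with completeness of V this makes V a real Hilbert space. *)
Definition is_inner_product {R : realType} {V : normedModType R}
  (ip : V -> V -> R) : Prop :=
  [/\ forall x y, ip x y = ip y x,
      forall a x y z, ip (a *: x + y) z = a * ip x z + ip y z
    & forall x, ip x x = `|x| ^+ 2].

Definition normal_cone {R : realType} {V : normedModType R}
  (ip : V -> V -> R) (C : set V) (x : V) : set V :=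
  [set nu | C x /\ forall y, C y -> ip nu (y - x) <= 0].

Definition monotone_on {R : realType} {V : normedModType R}
  (ip : V -> V -> R) (C : set V) (F : V -> V) : Prop :=
  forall x y, C x -> C y -> 0 <= ip (F x - F y) (x - y).

Definition frechet_deriv_on {R : realType} {V : normedModType R}
  (C : set V) (F : V -> V) (F' : V -> V -> V) : Prop :=
  forall x, C x ->
    [/\ forall (a : R) u v, F' x (a *: u + v) = a *: F' x u + F' x v,
        exists M : R, forall v, `|F' x v| <= M * `|v|
      & forall eps : R, 0 < eps -> exists2 delta : R, 0 < delta &
          forall y, C y -> `|y - x| < delta ->
            `|F y - F x - F' x (y - x)| <= eps * `|y - x| ].

(* ||F'(x) - F'(y)|| <= L ||x - y|| in operator norm, written out. *)
Definition deriv_lipschitz_on {R : realType} {V : normedModType R}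
  (C : set V) (F' : V -> V -> V) (L : R) : Prop :=
  forall x y, C x -> C y -> forall v,
    `|F' x v - F' y v| <= L * `|x - y| * `|v|.

Definition theta_hat {R : realType} (sig th : R) : R :=
  th * (sig / (1 - sig) + th / (1 - sig) ^+ 2).

Definition tau_param {R : realType} (th thh eta L : R) : R :=
  2 * (th - thh) /
  (2 * th + eta * L / 2 +
     Num.sqrt ((2 * th + eta * L / 2) ^+ 2 - 4 * th * (th - thh))).

(* Both bounds are proved by induction on k, carrying along that lam_k > 0 and
   that nu_k lies in the normal cone at y_k.  In an inexact Newton step,
   monotonicity of F' and of the normal cone gives
   (1 - sig) |y_k - y_{k-1}| <= |lam_k (F y_{k-1} + nu_{k-1}) + y_{k-1} - x_{k-1}|,
   while the Lipschitz continuity of F' bounds the linearization error by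
   L/2 |y_k - y_{k-1}|^2; for W = lam_k L/2 |y_k - y_{k-1}|, bound (a) gives
   (1 - sig) W <= theta, and then (b) follows from sig W + W^2 <= theta_hat.
   Bound (a) at step k+1 follows from (b) at step k: a large step leaves the
   vector in (b) unchanged and scales lam by 1 - tau, and a small step
   (lam_k |y_k - x_{k-1}| < eta) divides lam by 1 - tau, which tau is chosen to
   absorb: theta (1 - tau)^2 = theta_hat + tau eta L / 2. *)

From mathcomp Require Import all_boot all_order all_algebra.
From mathcomp Require Import all_classical all_reals all_analysis.
From mathcomp Require Import ring lra.
Set Implicit Arguments.
Unset Strict Implicit.
Unset Printing Implicit Defensive.
Import Order.TTheory GRing.Theory Num.Theory.
Import numFieldNormedType.Exports.
Local Open Scope classical_set_scope.
Local Open Scope ring_scope.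

Section InnerProduct.
Variables (R : realType) (V : normedModType R) (ip : V -> V -> R).
Hypothesis hip : is_inner_product ip.

Lemma ipC x y : ip x y = ip y x. Proof. by case: hip. Qed.

Lemma ipxx x : ip x x = `|x| ^+ 2. Proof. by case: hip. Qed.

Lemma ip0l z : ip 0 z = 0.
Proof.
case: hip => _ ip_lin _; have := ip_lin 1 0 0 z.
rewrite scale1r addr0 mul1r => h.
by apply: (addrI (ip 0 z)); rewrite addr0 -h.
Qed.

Lemma ipDl x y z : ip (x + y) z = ip x z + ip y z.
Proof. by case: hip => _ ip_lin _; have := ip_lin 1 x y z; rewrite scale1r mul1r. Qed.

Lemma ipZl a x z : ip (a *: x) z = a * ip x z.
Proof. by case: hip => _ ip_lin _; have := ip_lin a x 0 z; rewrite addr0 ip0l addr0. Qed.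

Lemma ipNl x z : ip (- x) z = - ip x z.
Proof. by rewrite -scaleN1r ipZl mulN1r. Qed.

Lemma ipBl x y z : ip (x - y) z = ip x z - ip y z.
Proof. by rewrite ipDl ipNl. Qed.

Lemma ipDr x y z : ip z (x + y) = ip z x + ip z y.
Proof. by rewrite ipC ipDl !(ipC z). Qed.

Lemma ipZr a x z : ip z (a *: x) = a * ip z x.
Proof. by rewrite ipC ipZl ipC. Qed.

Lemma ipNr x z : ip z (- x) = - ip z x.
Proof. by rewrite ipC ipNl ipC. Qed.

Lemma ip_le_normM u w : ip u w <= `|u| * `|w|.
Proof.
have : `|u + w| ^+ 2 <= (`|u| + `|w|) ^+ 2.
  by rewrite lerXn2r ?nnegrE ?addr_ge0 ?ler_normD.
by rewrite -ipxx ipDl !ipDr (ipC w u) !ipxx; nra.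
Qed.

Lemma normr_ip_le u w : `|ip u w| <= `|u| * `|w|.
Proof.
rewrite ler_norml ip_le_normM andbT lerNl -ipNl.
by rewrite -[`|u|]normrN ip_le_normM.
Qed.

(* Vector identities are proved below by testing them against every [z],
   which turns them into ring identities. *)
Lemma ip_inj u v : (forall z, ip u z = ip v z) -> u = v.
Proof.
move=> uv; apply/eqP; rewrite -subr_eq0 -normr_eq0 -sqrf_eq0 -ipxx.
by rewrite ipBl uv subrr.
Qed.

End InnerProduct.

Section DerivativeOnInterval.
Variable R : realType.

Definition has_deriv_on (a b : R) (phi phi' : R -> R) : Prop :=
  forall t, a <= t <= b -> forall e, 0 < e -> exists2 d, 0 < d &
    forall s, a <= s <= b -> `|s - t| < d ->
      `|phi s - phi t - phi' t * (s - t)| <= e * `|s - t|.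

Lemma has_deriv_onD a b phi phi' psi psi' :
  has_deriv_on a b phi phi' -> has_deriv_on a b psi psi' ->
  has_deriv_on a b (fun t => phi t + psi t) (fun t => phi' t + psi' t).
Proof.
move=> dphi dpsi t abt e e0; have e20 : 0 < e / 2 by rewrite divr_gt0.
have [d1 d10 hd1] := dphi t abt _ e20; have [d2 d20 hd2] := dpsi t abt _ e20.
exists (Num.min d1 d2) => [|s abs]; first by rewrite lt_min d10 d20.
rewrite lt_min => /andP[/(hd1 s abs) h1 /(hd2 s abs) h2].
have -> : phi s + psi s - (phi t + psi t) - (phi' t + psi' t) * (s - t) =
  (phi s - phi t - phi' t * (s - t)) + (psi s - psi t - psi' t * (s - t)) by ring.
by apply: (le_trans (ler_normD _ _)); lra.
Qed.

Lemma has_deriv_on_poly2 a b (c1 c2 : R) :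
  has_deriv_on a b (fun t => c1 * t + c2 * t ^+ 2) (fun t => c1 + 2 * c2 * t).
Proof.
move=> t _ e e0; exists (e / (`|c2| + 1)) => [|s _]; first by rewrite divr_gt0.
rewrite ltr_pdivlMr ?ltr_pwDr // => hst.
have -> : c1 * s + c2 * s ^+ 2 - (c1 * t + c2 * t ^+ 2) - (c1 + 2 * c2 * t) * (s - t)
  = c2 * (s - t) ^+ 2 by ring.
rewrite normrM normrX; have := normr_ge0 (s - t); have := normr_ge0 c2; nra.
Qed.

(* For each [e > 0], the set of [t] up to which [phi] stays below the line of
   slope [e] through [(a, phi a)] contains its supremum, which must be [b]. *)
Lemma has_deriv_on_le0_le a b phi phi' : a <= b -> has_deriv_on a b phi phi' ->
  (forall t, a <= t <= b -> phi' t <= 0) -> phi b <= phi a.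
Proof.
move=> ab dphi neg.
suff slope e : 0 < e -> phi b <= phi a + e * (b - a).
  apply/ler_addgt0Pr => e e0; have ba1 : 0 < b - a + 1 by lra.
  apply: (le_trans (slope _ (divr_gt0 e0 ba1))).
  by rewrite lerD2l mulrAC ler_pdivrMr //; nra.
move=> e0.
pose S := [set t | a <= t <= b /\
  forall u, a <= u <= t -> phi u <= phi a + e * (u - a)].
have Sa : S a.
  split=> [|u /andP[au ua]]; first by rewrite lexx.
  have -> : u = a by apply/eqP; rewrite eq_le ua au.
  by rewrite subrr mulr0 addr0.
have supS : has_sup S by split; [exists a | exists b => t [/andP[]]].
set s := sup S; have le_s := sup_upper_bound supS.
have a_s : a <= s by exact: le_s.
have sb : s <= b by apply: ge_sup; [exists a | move=> t [/andP[]]].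
have abs : a <= s <= b by rewrite a_s sb.
have [d d0 near_s] := dphi s abs e e0.
have neg_s := neg s abs.
have Ss : S s.
  split=> // u /andP[au us].
  have [ltus|] := ltP u s.
    have su : 0 < s - u by rewrite subr_gt0.
    have [t [_ St] ut] := sup_adherent su supS; rewrite -/s in ut.
    by apply: St; rewrite au; lra.
  move=> su; have -> : u = s by apply/eqP; rewrite eq_le us su.
  have [t St st] := sup_adherent d0 supS; rewrite -/s in st.
  have ts : t <= s by exact: le_s.
  have [/andP[a_t _] St'] := St.
  have := near_s t St.1; rewrite distrC ger0_norm ?subr_ge0 //.
  move=> /(_ ltac:(lra)); rewrite ler_norml => /andP[h _].
  have := St' t; rewrite a_t lexx => /(_ isT); nra.
suff s_eq : s = b by have := Ss.2 b; rewrite s_eq ab lexx; apply.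
apply/eqP; rewrite eq_le sb /=; rewrite leNgt; apply/negP => sltb.
pose s' := Num.min b (s + d / 2).
have [s'b s'd ss'] : [/\ s' <= b, s' <= s + d / 2 & s < s'].
  by rewrite !ge_min lt_min lexx sltb /=; split=> //; rewrite ?orbT //; lra.
suff /le_s : S s' by rewrite -/s; lra.
split=> [|u /andP[au us']]; first by apply/andP; split; lra.
have [us|su] := leP u s; first by case: Ss => _; apply; rewrite au us.
have := near_s u; rewrite au /= => /(_ ltac:(lra)).
rewrite ger0_norm ?subr_ge0 ?(ltW su) // => /(_ ltac:(lra)).
rewrite ler_norml => /andP[_ h].
have := Ss.2 s; rewrite a_s lexx => /(_ isT); nra.
Qed.

End DerivativeOnInterval.

Section FrechetSegment.
Variables (R : realType) (V : normedModType R) (ip : V -> V -> R).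
Variables (C : set V) (F : V -> V) (F' : V -> V -> V) (L : R).
Hypotheses (hip : is_inner_product ip) (convC : convex_set C).
Hypothesis hF : frechet_deriv_on C F F'.

Lemma convex_segment y y' t : C y -> C y' -> 0 <= t <= 1 -> C (y + t *: (y' - y)).
Proof.
move=> Cy Cy' /andP[t0 t1].
have := set_mem (convC (Itv01 t0 t1) (mem_set Cy') (mem_set Cy)); congr C.
by rewrite /conv /= /unstable.onem scalerBl scale1r scalerBr addrCA.
Qed.

Lemma frechet_derivZ x a u : C x -> F' x (a *: u) = a *: F' x u.
Proof.
move=> Cx; have [lin _ _] := hF Cx.
have F'x0 : F' x 0 = 0.
  have := lin 1 0 0; rewrite !scale1r !addr0 => h.
  by apply: (addrI (F' x 0)); rewrite addr0 -h.
by rewrite -[a *: u]addr0 lin F'x0 addr0.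
Qed.

Lemma has_deriv_on_ip_segment y y' q : C y -> C y' ->
  has_deriv_on 0 1 (fun t => ip (F (y + t *: (y' - y))) q)
                   (fun t => ip (F' (y + t *: (y' - y)) (y' - y)) q).
Proof.
move=> Cy Cy' t t01 e e0; set d := y' - y.
have Cz s : 0 <= s <= 1 -> C (y + s *: d) by exact: convex_segment.
have [_ _ frechet] := hF (Cz t t01).
have nd := normr_ge0 d; have nq := normr_ge0 q.
have c0 : 0 < `|d| * `|q| + 1 by nra.
have [dl dl0 near_t] := frechet _ (divr_gt0 e0 c0).
exists (dl / (`|d| + 1)) => [|s s01]; first by rewrite divr_gt0 //; lra.
have nst := normr_ge0 (s - t).
rewrite ltr_pdivlMr; last lra.
move=> hst; have sd : `|s - t| * `|d| < dl.
  by apply: le_lt_trans hst; rewrite ler_wpM2l // lerDl.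
have zst : y + s *: d - (y + t *: d) = (s - t) *: d.
  by rewrite scalerBl opprD addrACA subrr add0r.
have := near_t _ (Cz s s01); rewrite zst normrZ => /(_ sd).
set r := _ - _ - _ => hr.
have -> : ip (F (y + s *: d)) q - ip (F (y + t *: d)) q - ip (F' (y + t *: d) d) q * (s - t)
    = ip r q.
  rewrite /r frechet_derivZ; last exact: Cz.
  by rewrite !(ipBl hip) (ipZl hip) mulrC.
apply: (le_trans (normr_ip_le hip r q)).
have E : e / (`|d| * `|q| + 1) * (`|d| * `|q| + 1) = e by rewrite divfK // gt_eqF.
set k := e / _ in hr E; have k0 : 0 <= k by rewrite ltW ?divr_gt0.
apply: (le_trans (ler_wpM2r nq hr)); rewrite -E.
have := mulr_ge0 k0 nst; nra.
Qed.

Lemma frechet_deriv_monotone y y' : monotone_on ip C F ->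
  C y -> C y' -> 0 <= ip (F' y (y' - y)) (y' - y).
Proof.
move=> mono Cy Cy'; set d := y' - y; apply/ler_addgt0Pr => e e0.
have := has_deriv_on_ip_segment d Cy Cy'; rewrite -/d.
move=> /(_ 0); rewrite lexx ler01 => /(_ isT e e0) [dl dl0 near0].
pose s := Num.min 1 (dl / 2).
have s0 : 0 < s by rewrite lt_min ltr01 divr_gt0.
have s1 : s <= 1 by rewrite ge_min lexx.
have sdl : s < dl by rewrite gt_min; apply/orP; right; lra.
have s01 : 0 <= s <= 1 by rewrite s1 ltW.
have := near0 s s01; rewrite subr0 ger0_norm; last exact: ltW.
move=> /(_ sdl); rewrite scale0r addr0 ler_norml => /andP[_ h].
have := mono _ _ (convex_segment Cy Cy' s01) Cy.
rewrite -/d addrAC subrr add0r (ipZr hip) (ipBl hip) pmulr_rge0 // => h'.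
suff : 0 <= (ip (F' y d) d + e) * s by rewrite pmulr_lge0.
rewrite mulrDl [e * s]mulrC; lra.
Qed.

Hypotheses (L0 : 0 <= L) (hL : deriv_lipschitz_on C F' L).

(* For [d = y' - y], the error [q] and [K = L/2 |d|^2 |q|], the Lipschitz bound
   on [F'] makes [phi t = <F (y + t d) - t F'(y) d, q> - K t^2] nonincreasing
   on [0, 1], and [phi 1 <= phi 0] reads [|q|^2 <= K]. *)
Lemma frechet_taylor y y' : C y -> C y' ->
  `|F y' - F y - F' y (y' - y)| <= L / 2 * `|y' - y| ^+ 2.
Proof.
move=> Cy Cy'; set d := y' - y; set q := F y' - F y - F' y d.
pose K := L / 2 * `|d| ^+ 2 * `|q|.
have dphi := has_deriv_onD (has_deriv_on_ip_segment q Cy Cy')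
  (has_deriv_on_poly2 (- ip (F' y d) q) (- K)).
have nd := normr_ge0 d; have nq := normr_ge0 q.
have zt t : y + t *: d - y = t *: d by rewrite addrAC subrr add0r.
have neg t : 0 <= t <= 1 ->
    ip (F' (y + t *: d) d) q + (- ip (F' y d) q + 2 * - K * t) <= 0.
  move=> t01; have /andP[t0 _] := t01.
  have := hL (convex_segment Cy Cy' t01) Cy d.
  rewrite zt normrZ ger0_norm // => /(ler_wpM2r nq) lip.
  have := le_trans (ip_le_normM hip _ q) lip.
  by rewrite (ipBl hip) /K; lra.
have := has_deriv_on_le0_le ler01 dphi neg.
have -> : y + 1 *: d = y' by rewrite scale1r subrKC.
rewrite scale0r addr0 expr1n expr0n /= !mulr0 !mulr1 => h.
have : `|q| ^+ 2 <= K by rewrite -(ipxx hip) /q !(ipBl hip); lra.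
rewrite /K => hq; have M0 : 0 <= L / 2 * `|d| ^+ 2 by rewrite mulr_ge0 ?divr_ge0.
nra.
Qed.

End FrechetSegment.

Section Constants.
Variable R : realType.
Implicit Types sig th thh eta L W : R.

Lemma theta_hatM sig th : sig < 1 ->
  theta_hat sig th * (1 - sig) ^+ 2 = th * (sig * (1 - sig) + th).
Proof. by move=> sig1; rewrite /theta_hat; field; rewrite gt_eqF // subr_gt0. Qed.

Lemma theta_hat_ge0 sig th : 0 <= sig < 1 -> 0 <= th -> 0 <= theta_hat sig th.
Proof.
move=> /andP[sig0 sig1] th0; have sig1' : 0 < 1 - sig by rewrite subr_gt0.
by rewrite /theta_hat mulr_ge0 // addr_ge0 // divr_ge0 // ?exprn_ge0 // ltW.
Qed.

Lemma theta_hat_lt sig th : sig < 1 -> 0 < th ->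
  th < (1 - sig) * (1 - 2 * sig) -> theta_hat sig th < th.
Proof.
move=> sig1 th0 th_lt; have sig1' : 0 < (1 - sig) ^+ 2 by rewrite exprn_gt0 // subr_gt0.
by rewrite -(ltr_pM2r sig1') theta_hatM //; nra.
Qed.

Lemma quadratic_le_theta_hat sig th W : 0 <= sig < 1 -> 0 <= W ->
  (1 - sig) * W <= th -> sig * W + W ^+ 2 <= theta_hat sig th.
Proof.
move=> /andP[sig0 sig1] W0 hW.
have sig1' : 0 < (1 - sig) ^+ 2 by rewrite exprn_gt0 // subr_gt0.
rewrite -(ler_pM2r sig1') theta_hatM //.
have -> : (sig * W + W ^+ 2) * (1 - sig) ^+ 2 =
  sig * (1 - sig) * ((1 - sig) * W) + ((1 - sig) * W) ^+ 2 by ring.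
have : 0 <= (1 - sig) * W by rewrite mulr_ge0 // subr_ge0 ltW.
have : 0 <= sig * (1 - sig) by rewrite mulr_ge0 // subr_ge0 ltW.
nra.
Qed.

Section Tau.
Variables th thh eta L : R.
Hypotheses (thh0 : 0 <= thh) (thh_lt : thh < th) (eta0 : 0 < eta) (L0 : 0 < L).
Local Notation tau := (tau_param th thh eta L).

Let h0 : 0 < eta * L / 2. Proof. by rewrite divr_gt0 // mulr_gt0. Qed.

Let denom_gt0 :
  0 < 2 * th + eta * L / 2 + Num.sqrt ((2 * th + eta * L / 2) ^+ 2 - 4 * th * (th - thh)).
Proof. by rewrite ltr_wpDr ?sqrtr_ge0 // addr_gt0 // mulr_gt0 // (le_lt_trans thh0). Qed.

Lemma tau_param_gt0 : 0 < tau.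
Proof. by rewrite divr_gt0 // mulr_gt0 // subr_gt0. Qed.

Lemma tau_param_lt1 : tau < 1.
Proof.
rewrite ltr_pdivrMr // mul1r.
move: thh0 h0 (sqrtr_ge0 ((2 * th + eta * L / 2) ^+ 2 - 4 * th * (th - thh))); lra.
Qed.

(* [tau] is the smaller root of this quadratic equation. *)
Lemma tau_param_root : th * (1 - tau) ^+ 2 = thh + tau * (eta * L / 2).
Proof.
move: denom_gt0; rewrite /tau_param; set h := eta * L / 2; set B := 2 * th + h.
have th0 : 0 < th by apply: le_lt_trans thh_lt.
have D0 : 0 <= B ^+ 2 - 4 * th * (th - thh) by rewrite /B /h; move: thh0 h0 th0; nra.
set S := Num.sqrt _ => BS0; have S2 : S ^+ 2 = B ^+ 2 - 4 * th * (th - thh) by rewrite sqr_sqrtr.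
have E : th * (1 - 2 * (th - thh) / (B + S)) ^+ 2 - (thh + 2 * (th - thh) / (B + S) * h)
    = (th - thh) * (S ^+ 2 - (B ^+ 2 - 4 * th * (th - thh))) / (B + S) ^+ 2.
  by move: (gt_eqF BS0); rewrite /B => BS; field; rewrite BS.
by apply/eqP; rewrite -subr_eq0 E S2 subrr mulr0 mul0r.
Qed.

End Tau.
End Constants.

Section NewtonStep.
Variables (R : realType) (V : normedModType R) (ip : V -> V -> R).
Variables (C : set V) (F : V -> V) (F' : V -> V -> V) (L : R).
Hypotheses (hip : is_inner_product ip) (convC : convex_set C).
Hypotheses (hF : frechet_deriv_on C F F') (hmono : monotone_on ip C F).
Hypotheses (L0 : 0 <= L) (hL : deriv_lipschitz_on C F' L).

Lemma newton_step_length sig x y nu y' nu' lam : 0 <= lam ->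
  normal_cone ip C y nu -> normal_cone ip C y' nu' ->
  `|lam *: (F y + F' y (y' - y) + nu') + y' - x| <= sig * `|y' - y| ->
  (1 - sig) * `|y' - y| <= `|lam *: (F y + nu) + y - x|.
Proof.
move=> lam0 [Cy nuN] [Cy' nu'N] he.
set a := lam *: (F y + nu) + y - x; set e := lam *: _ + _ - _ in he.
have key : ip (e - a) (y' - y) =
    lam * (ip (F' y (y' - y)) (y' - y) + ip nu' (y' - y) - ip nu (y' - y))
    + `|y' - y| ^+ 2.
  by rewrite /e /a -(ipxx hip) !(ipBl hip, ipDl hip, ipNl hip, ipZl hip); ring.
have nu'_w : 0 <= ip nu' (y' - y).
  by rewrite -oppr_le0 -(ipNr hip) opprB; exact: nu'N.
set w := y' - y in he key nu'_w *.
have nu_w : ip nu w <= 0 := nuN y' Cy'.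
have F'_w : 0 <= ip (F' y w) w := frechet_deriv_monotone hip convC hF hmono Cy Cy'.
have hw : `|w| ^+ 2 <= `|e - a| * `|w|.
  apply: le_trans (ip_le_normM hip _ _); rewrite key lerDr.
  by apply: mulr_ge0 lam0 _; lra.
have := normr_ge0 w; rewrite le_eqVlt => /orP[/eqP <-|w0]; first by rewrite mulr0.
rewrite expr2 ler_pM2r // in hw.
have := ler_normB e a; lra.
Qed.

Lemma newton_residual x y y' nu' lam : C y -> C y' -> 0 <= lam ->
  `|lam *: (F y' + nu') + y' - x| <=
  `|lam *: (F y + F' y (y' - y) + nu') + y' - x| + lam * (L / 2 * `|y' - y| ^+ 2).
Proof.
move=> Cy Cy' lam0.
have -> : lam *: (F y' + nu') + y' - x = lam *: (F y + F' y (y' - y) + nu') + y' - x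
    + lam *: (F y' - F y - F' y (y' - y)).
  by apply: (ip_inj hip) => z; rewrite !(ipBl hip, ipDl hip, ipNl hip, ipZl hip); ring.
apply: (le_trans (ler_normD _ _)); rewrite lerD2l normrZ ger0_norm //.
by rewrite ler_wpM2l // (frechet_taylor hip convC hF L0 hL Cy Cy').
Qed.

Lemma inexact_newton_step sig th x y nu y' nu' lam : 0 <= sig < 1 -> 0 < lam ->
  normal_cone ip C y nu -> normal_cone ip C y' nu' ->
  `|lam *: (F y + F' y (y' - y) + nu') + y' - x| <= sig * `|y' - y| ->
  lam * L / 2 * `|lam *: (F y + nu) + y - x| <= th ->
  lam * L / 2 * `|lam *: (F y' + nu') + y' - x| <= theta_hat sig th.
Proof.
move=> sig01 lam0 Ny Ny' he ha.
have len := newton_step_length (ltW lam0) Ny Ny' he.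
have res := newton_residual x nu' Ny.1 Ny'.1 (ltW lam0).
have c0 : 0 <= lam * L / 2 by rewrite divr_ge0 // mulr_ge0 // ltW.
have W0 : 0 <= lam * L / 2 * `|y' - y| by rewrite mulr_ge0.
have hW : (1 - sig) * (lam * L / 2 * `|y' - y|) <= th.
  by apply: (le_trans _ ha); rewrite mulrCA; apply: ler_wpM2l.
apply: (le_trans _ (quadratic_le_theta_hat sig01 W0 hW)).
apply: le_trans (ler_wpM2l c0 res) _.
have := ler_wpM2l c0 he; nra.
Qed.

Lemma y_update_invariant sig th x y nu y' nu' lam : 0 <= sig < 1 -> 0 < lam ->
  normal_cone ip C y nu -> lam * L / 2 * `|lam *: (F y + nu) + y - x| <= th ->
  (if lam * L / 2 * `|lam *: (F y + nu) + y - x| <= theta_hat sig th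
   then y' = y /\ nu' = nu
   else normal_cone ip C y' nu' /\
        `|lam *: (F y + F' y (y' - y) + nu') + y' - x| <= sig * `|y' - y|) ->
  normal_cone ip C y' nu' /\
  lam * L / 2 * `|lam *: (F y' + nu') + y' - x| <= theta_hat sig th.
Proof.
move=> sig01 lam0 Ny ha; case: ifP => [skip [-> ->] // | _ [Ny' he]].
by split=> //; apply: inexact_newton_step Ny Ny' he ha.
Qed.

End NewtonStep.

Section ExtragradientUpdate.
Variables (R : realType) (V : normedModType R).

Lemma large_step_bound th thh L tau (x y' v : V) lam : 0 <= tau <= 1 -> 0 <= lam ->
  0 <= L -> thh <= th -> lam * L / 2 * `|lam *: v + y' - x| <= thh ->
  (1 - tau) * lam * L / 2 * `|((1 - tau) * lam) *: v + y' - (x - (tau * lam) *: v)|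
    <= th.
Proof.
move=> /andP[tau0 tau1] lam0 L0 thh_th hb.
rewrite opprB addrACA -scalerDl -mulrDl subrK mul1r addrA.
set N := `|_|; have N0 : 0 <= N := normr_ge0 _.
have c0 : 0 <= lam * L / 2 * N by rewrite !mulr_ge0.
have -> : (1 - tau) * lam * L / 2 * N = (1 - tau) * (lam * L / 2 * N) by ring.
by rewrite (le_trans (ler_piMl c0 _)) ?(le_trans hb) //; lra.
Qed.

Lemma small_step_bound th thh eta L tau (x y' v : V) lam : 0 < tau < 1 -> 0 <= L ->
  0 <= lam -> th * (1 - tau) ^+ 2 = thh + tau * (eta * L / 2) ->
  lam * L / 2 * `|lam *: v + y' - x| <= thh -> lam * `|y' - x| <= eta ->
  lam / (1 - tau) * L / 2 * `|(lam / (1 - tau)) *: v + y' - x| <= th.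
Proof.
move=> /andP[tau0 tau1] L0 lam0 root hb hY.
set r := (1 - tau)^-1.
have r1 : r * (1 - tau) = 1 by rewrite mulVf // gt_eqF // subr_gt0.
have rtau : r - 1 = r * tau by move: r1; lra.
have r0 : 0 < r by rewrite invr_gt0 subr_gt0.
have -> : (lam * r) *: v + y' - x = r *: (lam *: v + y' - x) + (1 - r) *: (y' - x).
  by rewrite -!addrA scalerDr -addrA -scalerDl subrKC scale1r scalerA [r * lam]mulrC.
set b := lam *: v + y' - x.
have r_ge1 : 1 <= r by rewrite -subr_ge0 rtau mulr_ge0 // ltW.
have hn : `|r *: b + (1 - r) *: (y' - x)| <= r * `|b| + (r - 1) * `|y' - x|.
  have nr : `|1 - r| = r - 1 by rewrite ler0_norm ?opprB // subr_le0.
  by apply: (le_trans (ler_normD _ _)); rewrite !normrZ (gtr0_norm r0) nr.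
have c0 : 0 <= lam * r * L / 2 by rewrite !mulr_ge0 // ltW.
apply: (le_trans (ler_wpM2l c0 hn)).
have E : r ^+ 2 * thh + r * (r - 1) * (L / 2) * eta = th.
  rewrite rtau; transitivity (r ^+ 2 * (thh + tau * (eta * L / 2))); first by ring.
  rewrite -root; transitivity (th * (r * (1 - tau)) ^+ 2); first by ring.
  by rewrite r1 expr1n mulr1.
have h1 : r ^+ 2 * (lam * L / 2 * `|b|) <= r ^+ 2 * thh by rewrite ler_wpM2l ?sqr_ge0.
have h2 : r * (r - 1) * (L / 2) * (lam * `|y' - x|) <= r * (r - 1) * (L / 2) * eta.
  by rewrite ler_wpM2l // rtau !mulr_ge0 // ?divr_ge0 // ltW.
rewrite -E; move: h1 h2; nra.
Qed.

Lemma x_update_invariant th thh eta L (x y' v x' : V) lam lam' :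
  0 <= thh -> thh < th -> 0 < eta -> 0 < L -> 0 < lam ->
  lam * L / 2 * `|lam *: v + y' - x| <= thh ->
  (let tau := tau_param th thh eta L in
   if eta <= lam * `|y' - x|
   then x' = x - (tau * lam) *: v /\ lam' = (1 - tau) * lam
   else x' = x /\ lam' = lam / (1 - tau)) ->
  0 < lam' /\ lam' * L / 2 * `|lam' *: v + y' - x'| <= th.
Proof.
move=> thh0 thh_lt eta0 L0 lam0 hb /=.
have tau0 := tau_param_gt0 thh0 thh_lt eta0 L0.
have tau1 := tau_param_lt1 thh0 thh_lt eta0 L0.
case: ifP => [_ [-> ->] | /negbT small [-> ->]].
  split; first by rewrite mulr_gt0 // subr_gt0.
  by apply: large_step_bound hb; rewrite ?ltW ?tau0 ?tau1.
move: small; rewrite -ltNge => /ltW small.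
split; first by rewrite divr_gt0 // subr_gt0.
apply: small_step_bound hb small; rewrite ?tau0 ?tau1 ?ltW //.
exact: tau_param_root.
Qed.

End ExtragradientUpdate.

Theorem proposition4p3 (R : realType) (V : completeNormedModType R)
  (ip : V -> V -> R) (C : set V) (F : V -> V) (F' : V -> V -> V)
  (L sig th eta : R)
  (x y nu : nat -> V) (lam : nat -> R) :
  is_inner_product ip ->
  C !=set0 -> closed C -> convex_set C ->
  monotone_on ip C F ->
  frechet_deriv_on C F F' ->
  0 < L -> deriv_lipschitz_on C F' L ->
  (exists2 z, C z & normal_cone ip C z (- F z)) ->
  0 <= sig -> sig < 1 / 2 ->
  0 < th -> th < (1 - sig) * (1 - 2 * sig) ->
  eta > 2 * theta_hat sig th / L ->
  (* initialization *)
  C (x 0%N) -> y 0%N = x 0%N -> nu 0%N = 0 ->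
  0 < lam 1%N -> lam 1%N ^+ 2 * `|F (y 0%N)| <= 2 * th / L ->
  (* standing assumption: the algorithm never stops *)
  (forall k : nat, F (y k) + nu k <> 0) ->
  (* iteration k+1 (k : nat), i.e. iteration k >= 1 of the paper *)
  (forall k : nat,
     if lam k.+1 * L / 2 * `|lam k.+1 *: (F (y k) + nu k) + y k - x k|
          <= theta_hat sig th
     then y k.+1 = y k /\ nu k.+1 = nu k
     else normal_cone ip C (y k.+1) (nu k.+1) /\
          `|lam k.+1 *: (F (y k) + F' (y k) (y k.+1 - y k) + nu k.+1)
             + y k.+1 - x k| <= sig * `|y k.+1 - y k|) ->
  (forall k : nat,
     let tau := tau_param th (theta_hat sig th) eta L in
     if eta <= lam k.+1 * `|y k.+1 - x k|
     then x k.+1 = x k - (tau * lam k.+1) *: (F (y k.+1) + nu k.+1) /\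
          lam k.+2 = (1 - tau) * lam k.+1
     else x k.+1 = x k /\ lam k.+2 = lam k.+1 / (1 - tau)) ->
  forall k : nat,
    lam k.+1 * L / 2 * `|lam k.+1 *: (F (y k) + nu k) + y k - x k| <= th /\
    lam k.+1 * L / 2 * `|lam k.+1 *: (F (y k.+1) + nu k.+1) + y k.+1 - x k|
      <= theta_hat sig th.
Proof.
move=> hip _ _ convC hmono hF L0 hL _ sig0 sig_lt th0 th_lt eta_gt.
move=> Cx0 y0 nu0 lam1 hlam1 _ hstep hx.
have sig1 : sig < 1 by lra.
have sig01 : 0 <= sig < 1 by rewrite sig0 sig1.
have thh0 := theta_hat_ge0 sig01 (ltW th0).
have thh_lt := theta_hat_lt sig1 th0 th_lt.
have eta0 : 0 < eta.
  by apply: le_lt_trans eta_gt; apply: divr_ge0; [exact: mulr_ge0 | exact: ltW].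
have inv k : [/\ 0 < lam k.+1, normal_cone ip C (y k) (nu k) &
    lam k.+1 * L / 2 * `|lam k.+1 *: (F (y k) + nu k) + y k - x k| <= th].
  elim: k => [|k [lam_gt0 Nk ak]].
    split=> //; first by split=> [|z _]; rewrite ?y0 ?nu0 ?(ip0l hip).
    move: hlam1; rewrite y0 nu0 addr0 addrK normrZ gtr0_norm // ler_pdivlMr //.
    lra.
  have [Nk' bk] := y_update_invariant hip convC hF hmono (ltW L0) hL sig01
    lam_gt0 Nk ak (hstep k).
  have [lam_gt0' ak'] := x_update_invariant thh0 thh_lt eta0 L0 lam_gt0 bk (hx k).
  by split.
move=> k; have [lam_gt0 Nk ak] := inv k.
split=> //.
by case: (y_update_invariant hip convC hF hmono (ltW L0) hL sig01 lam_gt0 Nk ak (hstep k)).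
Qed.
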